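(* Let $t_1,t_2:\Sigma^*\to\Omega^*$ be rational partial functions which are not adjacent. Then there are words $x,y,z\in\Sigma^*$ such that $xy^*z\subseteq\mathrm{dom}(t_1)\cap\mathrm{dom}(t_2)$ and $\|t_1(xy^kz),t_2(xy^kz)\|\in\Omega(k)$. In particular, there is a constant $c$ such that for each $k\in\mathbb N$ there exists a word $x\in\mathrm{dom}(t_1)\cap\mathrm{dom}(t_2)$ with $|x|\le c\,k$ (i.e. $|x|\in O(k)$) and $\|t_1(x),t_2(x)\|\ge k$.
   Context: For words $x,y$, $x\wedge y$ is their longest common suffix and $\|x,y\|=|x|+|y|-2|x\wedge y|$. Two partial functions $t_1,t_2$ are adjacent if $\sup\{\|t_1(w),t_2(w)\|:w\in\mathrm{dom}(t_1)\cap\mathrm{dom}(t_2)\}<\infty$, with the convention $\sup\emptyset=-\infty$. A partial function is rational if its graph is a rational subset of $\Sigma^*\times\Omega^*$. *)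

From mathcomp Require Import all_boot all_order all_algebra.
Set Implicit Arguments. Unset Strict Implicit. Unset Printing Implicit Defensive.

Section Words.
Variables (Sigma Omega : finType).

(* Rational subsets of the monoid Sigma^* x Omega^* (componentwise concatenation):
   the smallest family containing the empty set and singletons, closed under
   union, product and Kleene star (and extensional equality of sets). *)
Definition pair_cat (a b : seq Sigma * seq Omega) : seq Sigma * seq Omega :=
  (a.1 ++ b.1, a.2 ++ b.2).

Definition set_prod (A B : seq Sigma * seq Omega -> Prop) :=
  fun w => exists a b, A a /\ B b /\ w = pair_cat a b.

Inductive set_star (A : seq Sigma * seq Omega -> Prop) :
  seq Sigma * seq Omega -> Prop :=
| star_nil : set_star A ([::], [::])
| star_cons a w : A a -> set_star A w -> set_star A (pair_cat a w).

Inductive rational_set : (seq Sigma * seq Omega -> Prop) -> Prop :=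
| rat_empty : rational_set (fun _ => False)
| rat_single p : rational_set (fun w => w = p)
| rat_union A B : rational_set A -> rational_set B ->
    rational_set (fun w => A w \/ B w)
| rat_prod A B : rational_set A -> rational_set B -> rational_set (set_prod A B)
| rat_star A : rational_set A -> rational_set (set_star A)
| rat_ext A B : rational_set A -> (forall w, A w <-> B w) -> rational_set B.

Definition graph (t : seq Sigma -> option (seq Omega)) :=
  fun w : seq Sigma * seq Omega => t w.1 = Some w.2.

Definition rational_fun (t : seq Sigma -> option (seq Omega)) :=
  rational_set (graph t).

Definition in_dom (t : seq Sigma -> option (seq Omega)) (w : seq Sigma) :=
  t w != None.
End Words.

Section Dist.
Variable T : eqType.

Fixpoint lcp_len (x y : seq T) : nat :=
  match x, y with
  | a :: x', b :: y' => if a == b then (lcp_len x' y').+1 else 0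
  | _, _ => 0
  end.

Definition lcsuffix (x y : seq T) : seq T :=
  rev (take (lcp_len (rev x) (rev y)) (rev x)).

Definition wdist (x y : seq T) : nat :=
  size x + size y - 2 * size (lcsuffix x y).
End Dist.

(* t1, t2 adjacent: sup of ||t1 w, t2 w|| over the common domain is finite
   (sup of the empty set is -oo < oo). *)
Definition adjacent (Sigma Omega : finType)
  (t1 t2 : seq Sigma -> option (seq Omega)) :=
  exists B : nat, forall w u v, t1 w = Some u -> t2 w = Some v ->
    wdist u v <= B.

Definition pump (A : Type) (x y z : seq A) (k : nat) : seq A :=
  x ++ flatten (nseq k y) ++ z.

(* value of ||t1 w, t2 w|| (0 when undefined; only used on the common domain) *)
Definition dist_at (Sigma Omega : finType)
  (t1 t2 : seq Sigma -> option (seq Omega)) (w : seq Sigma) : nat :=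
  match t1 w, t2 w with
  | Some u, Some v => wdist u v
  | _, _ => 0
  end.

From mathcomp Require Import all_boot all_order all_algebra.
From mathcomp Require Import zify lra.
From Stdlib Require Import Classical.
Import Order.TTheory GRing.Theory Num.Theory.
Set Implicit Arguments. Unset Strict Implicit. Unset Printing Implicit Defensive.

(* Realize t1 and t2 by finite transducers with epsilon-moves and run them in
   lockstep on a common input.  What matters about a pair of outputs (u, v) is
   its suffix delay, the pair left after cancelling the longest common suffix:
   its total length is ||u, v||, and appending a pair of words to the left acts
   on it.  If some loop of the lockstep automaton, between an initial and a
   final state, changes the delay of the outputs produced after it, pumping
   the loop makes ||u, v|| grow linearly: either one output outgrows the other,
   or the reversed outputs diverge at a fixed position and both keep growing.
   Otherwise every such loop can be cut without changing the delay, so each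
   common input has the delay of a run visiting no state twice, whose outputs
   are bounded, and t1, t2 are adjacent. *)

(** * Delays of pairs of words *)

Section Power.
Variable T : Type.
Implicit Type a : seq T.

Definition wpow a k : seq T := flatten (nseq k a).

Lemma size_wpow a k : size (wpow a k) = k * size a.
Proof. by rewrite size_flatten /shape map_nseq sumn_nseq mulnC. Qed.

Lemma wpowS a k : wpow a k.+1 = a ++ wpow a k. Proof. by []. Qed.

Lemma wpowD a m n : wpow a (m + n) = wpow a m ++ wpow a n.
Proof. by rewrite /wpow nseqD flatten_cat. Qed.

Lemma wpowSr a k : wpow a k.+1 = wpow a k ++ a.
Proof. by rewrite -addn1 wpowD /wpow /= cats0. Qed.

Lemma rev_wpow a k : rev (wpow a k) = wpow (rev a) k.
Proof. by elim: k => [|k IH] //; rewrite wpowS rev_cat IH -wpowSr. Qed.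

Lemma size_pump (x y z : seq T) k : size (pump x y z k) = size x + k * size y + size z.
Proof. by rewrite /pump -/(wpow y k) !size_cat size_wpow addnA. Qed.

End Power.

Section Delay.
Variable T : eqType.
Implicit Types u v a b p A B X Y : seq T.

Lemma lcp_lenC u v : lcp_len u v = lcp_len v u.
Proof. by elim: u v => [|x u IH] [|y v] //=; rewrite eq_sym; case: eqP; rewrite ?IH. Qed.

Lemma lcp_len_sizel u v : lcp_len u v <= size u.
Proof. by elim: u v => [|x u IH] [|y v] //=; case: eqP => // _; apply: IH. Qed.

Lemma lcp_len_sizer u v : lcp_len u v <= size v.
Proof. by rewrite lcp_lenC lcp_len_sizel. Qed.

Lemma lcp_len_cat2l p u v : lcp_len (p ++ u) (p ++ v) = size p + lcp_len u v.
Proof. by elim: p => [|x p IH] //=; rewrite eqxx IH. Qed.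

Lemma take_lcp_len u v : take (lcp_len u v) u = take (lcp_len u v) v.
Proof. by elim: u v => [|x u IH] [|y v] //=; case: eqP => // ->; rewrite /= IH. Qed.

Definition mismatch u v := (lcp_len u v < size u) && (lcp_len u v < size v).

Lemma mismatchC u v : mismatch u v = mismatch v u.
Proof. by rewrite /mismatch lcp_lenC andbC. Qed.

Lemma lcp_len_mismatch_cat u v a b :
  mismatch u v -> lcp_len (u ++ a) (v ++ b) = lcp_len u v.
Proof.
elim: u v => [|x u IH] [|y v] //; rewrite /mismatch /=.
by case: eqP => // _ h; rewrite IH.
Qed.

Lemma prefix_of_no_mismatch u v :
  ~~ mismatch u v -> size u <= size v -> exists r, v = u ++ r.
Proof.
elim: u v => [|x u IH] [|y v] //=; first by exists [::].
  by move=> _; exists (y :: v).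
by rewrite /mismatch /=; case: eqP => [<- /IH uv /uv [r ->]|//]; exists r.
Qed.

Lemma drop_cat_leq n u a : n <= size u -> drop n (u ++ a) = drop n u ++ a.
Proof.
move=> le_n_u; rewrite -{1}(cat_take_drop n u) -catA drop_size_cat //.
by rewrite size_take_min (minn_idPl le_n_u).
Qed.

Definition delay u v := (drop (lcp_len u v) u, drop (lcp_len u v) v).

Definition pdist u v := size (delay u v).1 + size (delay u v).2.

Lemma delayC u v : delay v u = ((delay u v).2, (delay u v).1).
Proof. by rewrite /delay lcp_lenC. Qed.

Lemma pdistC u v : pdist u v = pdist v u.
Proof. by rewrite /pdist delayC addnC. Qed.

Lemma pdistE u v : pdist u v = size u + size v - 2 * lcp_len u v.
Proof.
rewrite /pdist /= !size_drop.
by have := lcp_len_sizel u v; have := lcp_len_sizer u v; lia.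
Qed.

Lemma leq_size_pdist u v : size u - size v <= pdist u v.
Proof. by rewrite pdistE; have := lcp_len_sizel u v; have := lcp_len_sizer u v; lia. Qed.

Lemma delay_cat u v a b :
  delay (u ++ a) (v ++ b) = delay ((delay u v).1 ++ a) ((delay u v).2 ++ b).
Proof.
rewrite /delay /=; set L := lcp_len u v.
have [Lu Lv] : L <= size u /\ L <= size v by rewrite lcp_len_sizel lcp_len_sizer.
have lcpE : lcp_len (u ++ a) (v ++ b) = L + lcp_len (drop L u ++ a) (drop L v ++ b).
  rewrite -{1}(cat_take_drop L u) -{1}(cat_take_drop L v) take_lcp_len -!catA.
  by rewrite lcp_len_cat2l size_take_min (minn_idPl Lv).
by rewrite lcpE addnC -!drop_drop (drop_cat_leq a Lu) (drop_cat_leq b Lv).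
Qed.

Lemma delay_cat_prefix p d : delay (p ++ d) p = (d, [::]).
Proof.
rewrite /delay; have -> : lcp_len (p ++ d) p = size p.
  by rewrite -{2}(cats0 p) lcp_len_cat2l; case: d => [|? ?]; rewrite addn0.
by rewrite drop_size_cat // drop_size.
Qed.

Lemma cat_commute_of_wpow_prefix D A B :
  size A = size B -> (forall k, exists r, D ++ wpow A k = wpow B k ++ r) ->
  D ++ A = B ++ D.
Proof.
move=> eAB prefix; have [/size0nil A0|A_gt0] := posnP (size A).
  by move: eAB; rewrite A0 => /esym/size0nil ->; rewrite cats0.
set n := size D; have [r1 e1] := prefix n.+1; have [r0 e0] := prefix n.
have long : n + size A <= size (wpow B n.+1) by rewrite size_wpow -eAB; nia.
have -> : D ++ A = take (n + size A) (wpow B n.+1).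
  by rewrite -(takel_cat r1 long) -e1 wpowS catA take_size_cat // size_cat.
rewrite -(takel_cat r0 long) wpowS -catA -e0 catA take_size_cat //.
by rewrite size_cat eAB addnC.
Qed.

Lemma mismatch_wpow X X' A B :
  size A = size B -> delay (X ++ A) (X' ++ B) != delay X X' ->
  exists k, mismatch (X ++ wpow A k) (X' ++ wpow B k).
Proof.
wlog le_X'X : X X' A B / size X' <= size X => [hwlog eAB ne|eAB ne].
  have [le|/ltnW le] := leqP (size X') (size X); first exact: hwlog.
  have [|k m] := hwlog X' X B A le (esym eAB); last by exists k; rewrite mismatchC.
  rewrite delayC [delay X' X]delayC.
  by case: (delay X X') (delay (X ++ A) _) ne => ? ? [? ?]; apply: contra => /eqP [-> ->].
(* Otherwise X' B^k is always a prefix of X A^k; then X = X' D with D A = B D,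
   and appending A and B leaves the delay (D, [::]) unchanged. *)
apply: NNPP => no_mismatch.
have prefix k : exists r, X ++ wpow A k = X' ++ wpow B k ++ r.
  have /prefix_of_no_mismatch : ~~ mismatch (X' ++ wpow B k) (X ++ wpow A k).
    by rewrite mismatchC; apply/negP => m; apply: no_mismatch; exists k.
  case=> [|r ->]; last by exists r; rewrite catA.
  by rewrite !size_cat !size_wpow eAB leq_add2r.
have [D eD] : exists D, X = X' ++ D by have [D] := prefix 0; rewrite !cats0; exists D.
have DA : D ++ A = B ++ D.
  apply: cat_commute_of_wpow_prefix => // k; have [r] := prefix k.
  by rewrite eD -catA => /eqP; rewrite eqseq_cat // eqxx => /eqP; exists r.
by move: ne; rewrite eD -catA DA catA !delay_cat_prefix eqxx.
Qed.

Lemma pdist_wpow X X' A B Y Y' :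
  delay (X ++ A) (X' ++ B) != delay X X' ->
  exists K, forall k, k <= pdist (X ++ wpow A k ++ Y) (X' ++ wpow B k ++ Y') + K.
Proof.
move=> ne; have [eAB|neAB] := eqVneq (size A) (size B); last first.
  exists (size X + size Y + size X' + size Y') => k.
  have := leq_size_pdist (X ++ wpow A k ++ Y) (X' ++ wpow B k ++ Y').
  have := leq_size_pdist (X' ++ wpow B k ++ Y') (X ++ wpow A k ++ Y).
  rewrite pdistC !size_cat !size_wpow.
  case: (ltngtP (size A) (size B)) neAB => // lt_AB _.
    by have := leq_mul (leqnn k) lt_AB; rewrite mulnS; lia.
  by have := leq_mul (leqnn k) lt_AB; rewrite mulnS; lia.
have A_gt0 : 0 < size A.
  rewrite lt0n; apply: contra ne; rewrite size_eq0 => /eqP A0.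
  by move: eAB; rewrite A0 => /esym/size0nil ->; rewrite !cats0.
have [k1 m] := mismatch_wpow eAB ne.
set L := lcp_len (X ++ wpow A k1) (X' ++ wpow B k1).
exists (k1 + 2 * L) => k; have [le_k1k|] := leqP k1 k; last lia.
rewrite -(subnKC le_k1k) !wpowD !catA -(catA (X ++ _)) -(catA (X' ++ _)).
rewrite pdistE lcp_len_mismatch_cat // -/L !size_cat !size_wpow -eAB.
by nia.
Qed.

Definition sdelay u v := (rev (delay (rev u) (rev v)).1, rev (delay (rev u) (rev v)).2).

Lemma sdelay_cat a u b v :
  sdelay (a ++ u) (b ++ v) = sdelay (a ++ (sdelay u v).1) (b ++ (sdelay u v).2).
Proof. by rewrite /sdelay !rev_cat !revK [in LHS]delay_cat. Qed.

Lemma wdistE u v : wdist u v = pdist (rev u) (rev v).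
Proof.
rewrite /wdist pdistE /lcsuffix size_rev size_take_min.
by rewrite (minn_idPl (lcp_len_sizel _ _)) !size_rev.
Qed.

Lemma wdist_sdelay u v : wdist u v = size (sdelay u v).1 + size (sdelay u v).2.
Proof. by rewrite wdistE /pdist !size_rev. Qed.

Lemma wdist_wpow X X' A B Y Y' :
  sdelay (A ++ Y) (B ++ Y') != sdelay Y Y' ->
  exists K, forall k, k <= wdist (X ++ wpow A k ++ Y) (X' ++ wpow B k ++ Y') + K.
Proof.
move=> ne; have [|K bound] := @pdist_wpow (rev Y) (rev Y') (rev A) (rev B) (rev X) (rev X').
  by apply: contra ne => /eqP e; rewrite /sdelay !rev_cat e.
by exists K => k; rewrite wdistE !rev_cat !rev_wpow -!catA.
Qed.

End Delay.

(** * Transducers and Kleene's theorem *)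

Section Transducers.
Variables Sigma Omega : finType.
Notation word_pair := (seq Sigma * seq Omega)%type.

(* A transition reads at most one letter ([None] is an epsilon-move) and writes
   a word.  Transitions form an arbitrary relation; of the finiteness of a
   transducer, only the finite state set and a bound on written words are used. *)
Record transducer := Transducer {
  state : finType;
  initial : state -> Prop;
  final : state -> Prop;
  trans : state -> option Sigma -> seq Omega -> state -> Prop;
  out_bound : nat;
  size_out : forall p l o q, trans p l o q -> size o <= out_bound }.

Definition ocons (l : option Sigma) (w : seq Sigma) := if l is Some a then a :: w else w.

Lemma ocons_cat l w w' : ocons l w ++ w' = ocons l (w ++ w').
Proof. by case: l. Qed.

Inductive run (A : transducer) : state A -> state A -> seq Sigma -> seq Omega -> Prop :=
| run0 p : run p p [::] [::]
| runS p l o q r w u : trans p l o q -> run q r w u -> run p r (ocons l w) (o ++ u).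

Definition accepts (A : transducer) (x : word_pair) :=
  exists p q, [/\ @initial A p, final q & run p q x.1 x.2].

Definition recognizable (X : word_pair -> Prop) :=
  exists A, forall x, X x <-> accepts A x.

Lemma run_cat A p q r w u w' u' :
  run p q w u -> run q r w' u' -> @run A p r (w ++ w') (u ++ u').
Proof.
elim=> [//|p0 l o q0 r0 w0 u0 pq _ IH /IH qr].
by rewrite ocons_cat -catA; apply: runS pq qr.
Qed.

Lemma run_map (A B : transducer) (f : state A -> state B) :
  (forall p l o q, trans p l o q -> trans (f p) l o (f q)) ->
  forall p q w u, run p q w u -> run (f p) (f q) w u.
Proof.
move=> f_trans p q w u.
by elim=> [p0|p0 l o q0 r0 w0 u0 /f_trans pq _ qr]; [apply: run0 | apply: runS pq qr].
Qed.

Lemma run_eps (A : transducer) (p q r : state A) w u :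
  trans p None [::] q -> run q r w u -> run p r w u.
Proof. exact: (@runS A p None [::]). Qed.

Lemma run_cons_inv (A : transducer) (p q : state A) a w u : run p q (a :: w) u ->
  exists p1 p2 u1 o u2,
    [/\ run p p1 [::] u1, trans p1 (Some a) o p2, run p2 q w u2 & u = u1 ++ o ++ u2].
Proof.
move eq_aw : (a :: w) => aw pq; elim: pq eq_aw => // p0 [b|] o q0 r w0 u0 pq qr IH /=.
  by case=> -> ->; exists p0, q0, [::], o, u0; split=> //; apply: run0.
move/IH=> [p1 [p2 [u1 [o' [u2 [q0p1 p1p2 p2r ->]]]]]].
exists p1, p2, (o ++ u1), o', u2; split=> //; last by rewrite catA.
exact: (@runS A p0 None o q0 p1 [::] u1).
Qed.

Lemma recognizable_ext X Y :
  recognizable X -> (forall x, X x <-> Y x) -> recognizable Y.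
Proof. by move=> [A XA] XY; exists A => x; rewrite -XY. Qed.

Lemma sub_set_star (X Y : word_pair -> Prop) :
  (forall x, X x -> Y x) -> forall x, set_star X x -> set_star Y x.
Proof. by move=> XY x; elim=> [|a w /XY Ya _ IH]; [apply: star_nil | apply: star_cons]. Qed.

Definition empty_transducer : transducer := {|
  state := void; initial _ := False; final _ := False; trans _ _ _ _ := False; out_bound := 0;
  size_out _ _ _ _ (f : False) := match f with end |}.

Lemma recognizable_empty : recognizable (fun _ => False).
Proof. by exists empty_transducer => x; split=> // [[[]]]. Qed.

Section Atom.
Variables (l : option Sigma) (o : seq Omega).

Definition atom_trans (p : bool) l' o' (q : bool) := [/\ ~~ p, q, l' = l & o' = o].

Lemma size_atom_out p l' o' q : atom_trans p l' o' q -> size o' <= size o.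
Proof. by case=> _ _ _ ->. Qed.

Definition atom_transducer : transducer := {|
  state := bool; initial p := ~~ p; final q := q; trans := atom_trans;
  size_out := size_atom_out |}.

Lemma recognizable_atom : recognizable (fun x => x = (ocons l [::], o)).
Proof.
exists atom_transducer => -[w u]; split=> [[-> ->]|[p [q [/= + + pq]]]].
  exists false, true; split=> //=; rewrite -[o]cats0.
  by apply: (@runS atom_transducer false l o true); [|apply: run0].
case: pq => [r /negPf -> //|{}p l' o' {}q r w' u' [_ q1 -> ->] qr _ _].
by case: qr q1 => [? _|? ? ? ? ? ? ? /= [/negPf -> _ _ _] _ //]; rewrite cats0.
Qed.

End Atom.

Section Sum.
Variables (A B : transducer) (bridge : state A -> state B -> Prop).
Variables (I F : state A + state B -> Prop).

Definition sum_trans (s : state A + state B) l o t : Prop :=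
  match s, t with
  | inl p, inl q => trans p l o q
  | inr p, inr q => trans p l o q
  | inl p, inr q => [/\ bridge p q, l = None & o = [::]]
  | inr _, inl _ => False
  end.

Lemma size_sum_out s l o t :
  sum_trans s l o t -> size o <= maxn (out_bound A) (out_bound B).
Proof.
case: s t => [p|p] [q|q] //=; last by move/size_out/leq_trans; apply; rewrite leq_maxr.
  by move/size_out/leq_trans; apply; rewrite leq_maxl.
by case=> _ _ ->.
Qed.

Definition sum_transducer : transducer := {|
  state := (state A + state B)%type; initial := I; final := F; trans := sum_trans;
  size_out := size_sum_out |}.

Lemma run_inl p q w u : run p q w u -> @run sum_transducer (inl p) (inl q) w u.
Proof. exact: run_map. Qed.

Lemma run_inr p q w u : run p q w u -> @run sum_transducer (inr p) (inr q) w u.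
Proof. exact: run_map. Qed.

Lemma run_sum_inv s t w u : @run sum_transducer s t w u ->
  match s, t with
  | inl p, inl q => run p q w u
  | inr p, inr q => run p q w u
  | inl p, inr q => exists p' q' w1 w2 u1 u2,
      [/\ run p p' w1 u1, bridge p' q', run q' q w2 u2, w = w1 ++ w2 & u = u1 ++ u2]
  | inr _, inl _ => False
  end.
Proof.
elim=> [[p|p]|[p|p] l o [q|q] [r|r] w0 u0 //= pq _ IH]; try exact: run0.
- exact: runS pq IH.
- have [p' [q' [w1 [w2 [u1 [u2 [pp' br q'r -> ->]]]]]]] := IH.
  exists p', q', (ocons l w1), w2, (o ++ u1), u2.
  by split=> //; [apply: runS pq pp' | rewrite ocons_cat | rewrite catA].
- by case: pq => br -> ->; exists p, q, [::], w0, [::], u0; split=> //; apply: run0.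
- exact: runS pq IH.
Qed.

End Sum.

Definition union_transducer (A B : transducer) :=
  @sum_transducer A B (fun _ _ => False)
    (fun s => match s with inl p => initial p | inr q => initial q end)
    (fun s => match s with inl p => final p | inr q => final q end).

Lemma accepts_union A B x :
  accepts (union_transducer A B) x <-> accepts A x \/ accepts B x.
Proof.
split=> [[[p|p] [[q|q] [/= Ip Fq /run_sum_inv //= r]]]|].
- by left; exists p, q.
- by case: r => ? [? [? [? [? [? [_ [] ]]]]]].
- by right; exists p, q.
by case=> [[p [q [Ip Fq r]]]|[p [q [Ip Fq r]]]];
  [exists (inl p), (inl q); split=> //; apply: run_inl
  |exists (inr p), (inr q); split=> //; apply: run_inr].
Qed.

Lemma recognizable_union X Y :
  recognizable X -> recognizable Y -> recognizable (fun x => X x \/ Y x).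
Proof.
by move=> [A XA] [B YB]; exists (union_transducer A B) => x; rewrite accepts_union XA YB.
Qed.

Definition concat_transducer (A B : transducer) :=
  @sum_transducer A B (fun p q => final p /\ initial q)
    (fun s => if s is inl p then initial p else False)
    (fun s => if s is inr q then final q else False).

Lemma accepts_concat A B x :
  accepts (concat_transducer A B) x <-> set_prod (accepts A) (accepts B) x.
Proof.
split=> [[s [t [Is Ft /run_sum_inv]]]|].
  case: s t Is Ft => [p|//] [//|q] /= Ip Fq.
  case=> p' [q' [w1 [w2 [u1 [u2 [pp' [Fp' Iq'] q'q e1 e2]]]]]].
  exists (w1, u1), (w2, u2); split; first by exists p, p'.
  by split; [exists q', q | case: x e1 e2 => /= ? ? -> ->].
move=> [[w1 u1] [[w2 u2] [[p [p' [Ip Fp' pp']]] [[q' [q [Iq' Fq q'q]]] ->]]]].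
exists (inl p), (inr q); split=> //; apply: run_cat (run_inl _ _ _ pp') _.
by apply: run_eps (run_inr _ _ _ q'q).
Qed.

Lemma recognizable_prod X Y :
  recognizable X -> recognizable Y -> recognizable (set_prod X Y).
Proof.
move=> [A XA] [B YB]; exists (concat_transducer A B) => x; rewrite accepts_concat.
by split=> -[a [b [Xa [Yb ->]]]]; exists a, b; [rewrite -XA -YB | rewrite XA YB].
Qed.

Section Star.
Variable A : transducer.

Definition star_trans (s : option (state A)) l o t : Prop :=
  match s, t with
  | None, Some q => [/\ initial q, l = None & o = [::]]
  | Some p, Some q => trans p l o q
  | Some p, None => [/\ final p, l = None & o = [::]]
  | None, None => False
  end.

Lemma size_star_out s l o t : star_trans s l o t -> size o <= out_bound A.
Proof. by case: s t => [p|] [q|] //= => [/size_out|[_ _ ->]|[_ _ ->]]. Qed.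

Definition star_transducer : transducer := {|
  state := option (state A); initial s := s = None; final s := s = None;
  trans := star_trans; size_out := size_star_out |}.

Lemma run_some p q w u : run p q w u -> @run star_transducer (Some p) (Some q) w u.
Proof. exact: run_map. Qed.

Lemma run_star_inv s t w u : @run star_transducer s t w u -> t = None ->
  match s with
  | None => set_star (accepts A) (w, u)
  | Some p => exists p' w1 w2 u1 u2,
      [/\ run p p' w1 u1, final p', set_star (accepts A) (w2, u2),
          w = w1 ++ w2 & u = u1 ++ u2]
  end.
Proof.
elim=> [[p|] // _|[p|] l o [q|] r w0 u0 //= pq _ IH /IH {}IH]; first exact: star_nil.
- have [p' [w1 [w2 [u1 [u2 [qp' Fp' star -> ->]]]]]] := IH.
  exists p', (ocons l w1), w2, (o ++ u1), u2.
  by split=> //; [apply: runS pq qp' | rewrite ocons_cat | rewrite catA].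
- by case: pq => Fp -> ->; exists p, [::], w0, [::], u0; split=> //; apply: run0.
- case: pq => Iq -> ->; have [p' [w1 [w2 [u1 [u2 [qp' Fp' star -> ->]]]]]] := IH.
  by apply: (star_cons (a := (w1, u1))) star; exists q, p'.
Qed.

Lemma accepts_star x : accepts star_transducer x <-> set_star (accepts A) x.
Proof.
split=> [[s [t [/= -> -> /run_star_inv]]]|]; first by case: x => w u /(_ erefl).
elim=> [|a w [p [q [Ip Fq pq]]] _ [s [t [/= -> -> rw]]]].
  by exists None, None; split=> //; apply: run0.
exists None, None; split=> //=; apply: (@run_eps star_transducer None (Some p)) => //.
apply: run_cat (run_some pq) _.
exact: (@run_eps star_transducer (Some q) None).
Qed.

End Star.

Lemma recognizable_star X : recognizable X -> recognizable (set_star X).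
Proof.
move=> [A XA]; exists (star_transducer A) => x; rewrite accepts_star.
by split; apply: sub_set_star => y /XA.
Qed.

Lemma recognizable_single p : recognizable (fun x => x = p).
Proof.
case: p => w o; elim: w => [|a w IH]; first exact: (recognizable_atom None o).
apply: recognizable_ext (recognizable_prod (recognizable_atom (Some a) [::]) IH) _.
by move=> x; split=> [[_ [_ [-> [-> ->]]]] // | ->]; exists ([:: a], [::]), (w, o).
Qed.

Lemma recognizable_rational X : rational_set X -> recognizable X.
Proof.
elim=> [|p|Y Z _ rY _ rZ|Y Z _ rY _ rZ|Y _ rY|Y Z _ rY YZ].
- exact: recognizable_empty.
- exact: recognizable_single.
- exact: recognizable_union rY rZ.
- exact: recognizable_prod rY rZ.
- exact: recognizable_star rY.
- exact: recognizable_ext rY YZ.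
Qed.

End Transducers.

(** * Synchronized runs of two transducers *)

Section Synchronization.
Variables (Sigma Omega : finType) (A1 A2 : transducer Sigma Omega).

Definition jstate := (state A1 * state A2)%type.

Inductive jtrans : jstate -> option Sigma -> seq Omega -> seq Omega -> jstate -> Prop :=
| jtrans_both p1 p2 q1 q2 a o1 o2 : trans p1 (Some a) o1 q1 -> trans p2 (Some a) o2 q2 ->
    jtrans (p1, p2) (Some a) o1 o2 (q1, q2)
| jtrans_left p1 p2 q1 o1 : trans p1 None o1 q1 -> jtrans (p1, p2) None o1 [::] (q1, p2)
| jtrans_right p1 p2 q2 o2 : trans p2 None o2 q2 -> jtrans (p1, p2) None [::] o2 (p1, q2).

Inductive jrun : jstate -> jstate -> seq jstate -> seq Sigma -> seq Omega -> seq Omega -> Prop :=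
| jrun0 p : jrun p p [::] [::] [::] [::]
| jrunS p l o1 o2 q r ss w u v : jtrans p l o1 o2 q -> jrun q r ss w u v ->
    jrun p r (q :: ss) (ocons l w) (o1 ++ u) (o2 ++ v).

Definition jinitial (p : jstate) := initial p.1 /\ initial p.2.
Definition jfinal (p : jstate) := final p.1 /\ final p.2.

Lemma jrun_cat p q r ss w u v ss' w' u' v' :
  jrun p q ss w u v -> jrun q r ss' w' u' v' ->
  jrun p r (ss ++ ss') (w ++ w') (u ++ u') (v ++ v').
Proof.
elim=> [//|p0 l o1 o2 q0 r0 ss0 w0 u0 v0 pq _ IH /IH qr].
by rewrite ocons_cat -!catA; apply: jrunS pq qr.
Qed.

Lemma jrun_wpow s ss w u v : jrun s s ss w u v ->
  forall k, exists ss', jrun s s ss' (wpow w k) (wpow u k) (wpow v k).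
Proof.
move=> loop; elim=> [|k [ss' IH]]; first by exists [::]; apply: jrun0.
by exists (ss ++ ss'); rewrite !wpowS; apply: jrun_cat loop IH.
Qed.

Lemma jrun_split p r ss1 ss2 w u v : jrun p r (ss1 ++ ss2) w u v ->
  exists w1 w2 u1 u2 v1 v2,
    [/\ jrun p (last p ss1) ss1 w1 u1 v1, jrun (last p ss1) r ss2 w2 u2 v2,
        w = w1 ++ w2, u = u1 ++ u2 & v = v1 ++ v2].
Proof.
move eq_ss : (ss1 ++ ss2) => ss pr.
elim: pr ss1 eq_ss => [p0|p0 l o1 o2 q r0 ss0 w0 u0 v0 pq qr IH].
  by case=> [/= ->|//]; exists [::], [::], [::], [::], [::], [::]; split=> //; apply: jrun0.
case=> [/= ->|q' ss1 [-> /IH]] /=.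
  exists [::], (ocons l w0), [::], (o1 ++ u0), [::], (o2 ++ v0).
  by split=> //; [apply: jrun0 | apply: jrunS pq qr].
case=> w1 [w2 [u1 [u2 [v1 [v2 [qs sr -> -> ->]]]]]].
exists (ocons l w1), w2, (o1 ++ u1), u2, (o2 ++ v1), v2.
by split=> //; [apply: jrunS pq qs | rewrite ocons_cat | rewrite catA | rewrite catA].
Qed.

Lemma jrun_sound p q ss w u v :
  jrun p q ss w u v -> run p.1 q.1 w u /\ run p.2 q.2 w v.
Proof.
elim=> [p0|p0 l o1 o2 q0 r ss0 w0 u0 v0 pq _ [IH1 IH2]]; first by split; apply: run0.
case: pq IH1 IH2 => [p1 p2 q1 q2 a o1' o2' pq1 pq2|p1 p2 q1 o1' pq1|p1 p2 q2 o2' pq2] /= IH1 IH2.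
- by split; [apply: runS pq1 IH1 | apply: runS pq2 IH2].
- by split; [apply: runS pq1 IH1 | exact: IH2].
- by split; [exact: IH1 | apply: runS pq2 IH2].
Qed.

Lemma jrun_eps_right p1 p2 q2 v :
  run p2 q2 [::] v -> exists ss, jrun (p1, p2) (p1, q2) ss [::] [::] v.
Proof.
move eq_w : [::] => w pq; elim: pq eq_w => [p0 _|p0 l o q0 r w0 u0 pq _ IH].
  by exists [::]; apply: jrun0.
case: l pq => // pq /IH [ss qr].
by exists ((p1, q0) :: ss); apply: (jrunS (jtrans_right p1 pq) qr).
Qed.

Lemma jrun_complete p1 q1 w u : run p1 q1 w u ->
  forall p2 q2 v, run p2 q2 w v -> exists ss, jrun (p1, p2) (q1, q2) ss w u v.
Proof.
elim=> [p0|p0 [a|] o q0 r w0 u0 pq _ IH] p2 q2 v.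
- exact: jrun_eps_right.
- case/run_cons_inv=> p3 [p4 [v1 [o' [v2 [p2p3 p3p4 p4q2 ->]]]]].
  have [ss1 r1] := jrun_eps_right p0 p2p3.
  have [ss2 r2] := IH _ _ _ p4q2.
  by exists (ss1 ++ (q0, p4) :: ss2); apply: jrun_cat r1 (jrunS (jtrans_both pq p3p4) r2).
- move=> /IH [ss r2]; exists ((q0, p2) :: ss).
  exact: (jrunS (jtrans_left p2 pq) r2).
Qed.

Lemma jtrans_size_out p l o1 o2 q :
  jtrans p l o1 o2 q -> size o1 + size o2 <= out_bound A1 + out_bound A2.
Proof.
case=> [p1 p2 q1 q2 a o1' o2' /size_out b1 /size_out b2|p1 p2 q1 o1' /size_out b1|
        p1 p2 q2 o2' /size_out b2]; apply: leq_add => //; exact: leq0n.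
Qed.

Lemma jrun_size_out p q ss w u v :
  jrun p q ss w u v -> size u + size v <= size ss * (out_bound A1 + out_bound A2).
Proof.
elim=> [//|p0 l o1 o2 q0 r ss0 w0 u0 v0 /jtrans_size_out pq _ IH].
by rewrite /= !size_cat mulSn; lia.
Qed.

(* Outputs are compared at their ends, so a loop is tested against the outputs
   of the rest of an accepting run. *)
Definition delay_changing_loop :=
  exists p s f ss1 ss2 ss3 w1 w2 w3 u1 u2 u3 v1 v2 v3,
    [/\ jinitial p, jfinal f, jrun p s ss1 w1 u1 v1, jrun s s ss2 w2 u2 v2
      & jrun s f ss3 w3 u3 v3] /\ sdelay (u2 ++ u3) (v2 ++ v3) != sdelay u3 v3.

Lemma jrun_shorten : ~ delay_changing_loop ->
  forall p r ss w u v, jrun p r ss w u v ->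
  forall p0 ss0 w0 u0 v0, jinitial p0 -> jrun p0 p ss0 w0 u0 v0 -> jfinal r ->
  exists ss' w' u' v', [/\ jrun p r ss' w' u' v', uniq (p :: ss') & sdelay u' v' = sdelay u v].
Proof.
move=> no_loop p r ss w u v.
elim=> [q|p1 l o1 o2 q r1 ss1 w1 u1 v1 pq qr IH] p0 ss0 w0 u0 v0 Ip0 p0p Fr.
  by exists [::], [::], [::], [::]; split=> //; apply: jrun0.
have [ss' [w' [u' [v' [qr' uniq_ss' same]]]]] :=
  IH _ _ _ _ _ Ip0 (jrun_cat p0p (jrunS pq (jrun0 q))) Fr.
have extend : sdelay (o1 ++ u') (o2 ++ v') = sdelay (o1 ++ u1) (o2 ++ v1).
  by rewrite sdelay_cat same -sdelay_cat.
have [p1_in|p1_notin] := boolP (p1 \in q :: ss'); last first.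
  exists (q :: ss'), (ocons l w'), (o1 ++ u'), (o2 ++ v').
  by split=> //; [apply: jrunS pq qr' | rewrite cons_uniq p1_notin].
case/splitPl: p1_in qr' uniq_ss' extend => ss2 ss3 last_p1.
case/jrun_split=> w2 [w3 [u2 [u3 [v2 [v3 [qp1 p1r _ -> ->]]]]]] uniq_ss' extend.
rewrite last_p1 in qp1 p1r.
(* p1 is entered again later: the loop from p1 back to p1 can be cut. *)
have stable : sdelay ((o1 ++ u2) ++ u3) ((o2 ++ v2) ++ v3) = sdelay u3 v3.
  apply/eqP; apply: contra_notT no_loop => ne.
  exists p0, p1, r1, ss0, (q :: ss2), ss3, w0, (ocons l w2), w3, u0, (o1 ++ u2), u3.
  by exists v0, (o2 ++ v2), v3; split=> //; split=> //; apply: jrunS pq qp1.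
exists ss3, w3, u3, v3; split=> //; last by rewrite -stable -!catA.
rewrite cons_uniq; move: uniq_ss'; rewrite -cat_cons cat_uniq => /and3P [_ disjoint ->].
rewrite andbT; apply: contra disjoint => p1_ss3; apply/hasP; exists p1 => //.
by rewrite -last_p1 mem_last.
Qed.

Lemma wdist_bounded : ~ delay_changing_loop ->
  forall w u v, accepts A1 (w, u) -> accepts A2 (w, v) ->
  wdist u v <= #|{: jstate}| * (out_bound A1 + out_bound A2).
Proof.
move=> no_loop w u v [p1 [q1 [I1 F1 r1]]] [p2 [q2 [I2 F2 r2]]].
have [ss r] := jrun_complete r1 r2.
have [ss' [w' [u' [v' [r' uniq_ss' same]]]]] :=
  jrun_shorten no_loop r (p0 := (p1, p2)) (conj I1 I2) (jrun0 _) (conj F1 F2).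
have short : size ss' < #|{: jstate}|.
  move/card_uniqP: uniq_ss' => card_ss'.
  by have := max_card (mem ((p1, p2) :: ss')); rewrite card_ss'.
rewrite wdist_sdelay -same -wdist_sdelay (leq_trans (leq_subr _ _)) //.
exact: leq_trans (jrun_size_out r') (leq_mul (ltnW short) (leqnn _)).
Qed.

Lemma pump_of_delay_changing_loop : delay_changing_loop ->
  exists x y z K, forall k, exists u v,
    [/\ accepts A1 (pump x y z k, u), accepts A2 (pump x y z k, v) & k <= wdist u v + K].
Proof.
case=> p [s [f [ss1 [ss2 [ss3 [w1 [w2 [w3 [u1 [u2 [u3 [v1 [v2 [v3]]]]]]]]]]]]]].
case=> -[[I1 I2] [F1 F2] ps ss sf] ne.
have [K grows] := wdist_wpow u1 v1 ne.
exists w1, w2, w3, K => k; have [ss' loop_k] := jrun_wpow ss k.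
have [r1 r2] := jrun_sound (jrun_cat ps (jrun_cat loop_k sf)).
exists (u1 ++ wpow u2 k ++ u3), (v1 ++ wpow v2 k ++ v3).
by split=> //; [exists p.1, f.1 | exists p.2, f.2].
Qed.

End Synchronization.

Lemma not_adjacent_pump (Sigma Omega : finType) (t1 t2 : seq Sigma -> option (seq Omega)) :
  rational_fun t1 -> rational_fun t2 -> ~ adjacent t1 t2 ->
  exists x y z K, forall k,
    [/\ in_dom t1 (pump x y z k), in_dom t2 (pump x y z k)
      & k <= dist_at t1 t2 (pump x y z k) + K].
Proof.
move=> /recognizable_rational [A1 t1A1] /recognizable_rational [A2 t2A2] not_adj.
have [loop|no_loop] := classic (delay_changing_loop A1 A2); last first.
  case: not_adj; exists (#|{: jstate A1 A2}| * (out_bound A1 + out_bound A2)).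
  move=> w u v /(t1A1 (w, u)) t1w /(t2A2 (w, v)) t2w.
  exact: (wdist_bounded no_loop t1w t2w).
have [x [y [z [K grows]]]] := pump_of_delay_changing_loop loop.
exists x, y, z, K => k; have [u [v [/t1A1 t1k /t2A2 t2k lb]]] := grows k.
by rewrite /in_dom /dist_at t1k t2k.
Qed.

Local Open Scope ring_scope.

Lemma eventually_linear_lower_bound (f : nat -> nat) K :
  (forall k, k <= f k + K)%N ->
  exists (c : rat) k0, 0 < c /\ forall k, (k0 <= k)%N -> c * k%:R <= (f k)%:R.
Proof.
move=> lb; exists 2^-1, (2 * K)%N; split=> // k le_k0k.
have : (k%:R : rat) <= 2 * (f k)%:R by rewrite -natrM ler_nat; have := lb k; lia.
by lra.
Qed.

Theorem lemma21 (Sigma Omega : finType)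
  (t1 t2 : seq Sigma -> option (seq Omega)) :
  rational_fun t1 -> rational_fun t2 -> ~ adjacent t1 t2 ->
  (exists x y z : seq Sigma,
      (forall k : nat, in_dom t1 (pump x y z k) /\ in_dom t2 (pump x y z k)) /\
      (exists (c : rat) (k0 : nat), 0 < c /\
         forall k : nat, (k0 <= k)%N ->
           c * k%:R <= (dist_at t1 t2 (pump x y z k))%:R))
  /\
  (exists c d : nat, forall k : nat, exists w : seq Sigma,
      [/\ in_dom t1 w, in_dom t2 w, (size w <= c * k + d)%N
        & (k <= dist_at t1 t2 w)%N]).
Proof.
move=> rat1 rat2 not_adj.
have [x [y [z [K grows]]]] := not_adjacent_pump rat1 rat2 not_adj.
split.
  exists x, y, z; split=> [k|]; first by case: (grows k).
  apply: (@eventually_linear_lower_bound (fun k => dist_at t1 t2 (pump x y z k)) K).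
  by move=> k; case: (grows k).
exists (size y), (size x + size z + K * size y)%N => k.
have [dom1 dom2 lb] := grows (k + K)%N.
exists (pump x y z (k + K)); split=> //; last by lia.
by rewrite size_pump; nia.
Qed.
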